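(* Let $v$ be a nonzero vector of $\mathbb{F}_4^n$ and, for $1\le k\le n$, let $\sigma_k$ be the number of self-orthogonal additive codes over $\mathbb{F}_4$ of length $n$ and dimension $k$ containing $v$. Then \[ \sigma_k=\prod_{i=1}^{k-1}\frac{2^{2(n-i)}-1}{2^i-1} \] (with the empty product equal to $1$); in particular $\sigma_k$ does not depend on $v$.
   Context: $\mathbb{F}_4=\{0,1,\omega,\omega^2\}$ with $\omega^2=\omega+1$, $\bar x:=x^2$. Trace inner product $\langle u,v\rangle=\sum_{i}(u_i\bar v_i+\bar u_i v_i)\in\mathbb{F}_2$ on $\mathbb{F}_4^n$. An additive code of length $n$ is an $\mathbb{F}_2$-subspace of $\mathbb{F}_4^n$, with dimension meaning $\mathbb{F}_2$-dimension; $C^\perp$ is its dual under the trace inner product, and $C$ is self-orthogonal if $C\subseteq C^\perp$. *)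

From HB Require Import structures.
From mathcomp Require Import all_boot all_order all_algebra.
Set Implicit Arguments. Unset Strict Implicit. Unset Printing Implicit Defensive.
Import GRing.Theory.
Local Open Scope ring_scope.

(* The field F_4 = {0, 1, w, w^2} with w^2 = w + 1. *)
Inductive F4 := F0 | F1 | Fw | Fw2.

Definition F4_enc (x : F4) : bool * bool :=
  match x with F0 => (false, false) | F1 => (true, false)
  | Fw => (false, true) | Fw2 => (true, true) end.
Definition F4_dec (p : bool * bool) : F4 :=
  match p with (false, false) => F0 | (true, false) => F1
  | (false, true) => Fw | (true, true) => Fw2 end.
Lemma F4_encK : cancel F4_enc F4_dec. Proof. by case. Qed.

HB.instance Definition _ := Equality.copy F4 (can_type F4_encK).
HB.instance Definition _ := Choice.copy F4 (can_type F4_encK).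
HB.instance Definition _ := Countable.copy F4 (can_type F4_encK).
HB.instance Definition _ := Finite.copy F4 (can_type F4_encK).

Definition F4_add (x y : F4) : F4 :=
  match x, y with
  | F0, z | z, F0 => z
  | F1, F1 | Fw, Fw | Fw2, Fw2 => F0
  | F1, Fw | Fw, F1 => Fw2
  | F1, Fw2 | Fw2, F1 => Fw
  | Fw, Fw2 | Fw2, Fw => F1
  end.

Definition F4_mul (x y : F4) : F4 :=
  match x, y with
  | F0, _ | _, F0 => F0
  | F1, z | z, F1 => z
  | Fw, Fw => Fw2
  | Fw, Fw2 | Fw2, Fw => F1
  | Fw2, Fw2 => Fw
  end.

Definition F4_conj (x : F4) : F4 := F4_mul x x.

Lemma F4_addA : associative F4_add. Proof. by do 3!case. Qed.
Lemma F4_addC : commutative F4_add. Proof. by do 2!case. Qed.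
Lemma F4_add0 : left_id F0 F4_add. Proof. by case. Qed.
Lemma F4_addNr : left_inverse F0 id F4_add. Proof. by case. Qed.

HB.instance Definition _ :=
  GRing.isZmodule.Build F4 F4_addA F4_addC F4_add0 F4_addNr.

Definition word (n : nat) := {ffun 'I_n -> F4}.

Definition trace_ip (n : nat) (u v : word n) : F4 :=
  \sum_(i < n) (F4_mul (u i) (F4_conj (v i)) + F4_mul (F4_conj (u i)) (v i)).

Definition f2comb (n k : nat) (b : {ffun 'I_k -> word n}) (c : {ffun 'I_k -> bool}) : word n :=
  \sum_(i < k) (if c i then b i else 0).

Definition is_f2basis (n k : nat) (C : {set word n}) (b : {ffun 'I_k -> word n}) : bool :=
  [forall c : {ffun 'I_k -> bool}, (f2comb b c == 0) ==> [forall i, ~~ c i]] &&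
  (C == [set f2comb b c | c : {ffun 'I_k -> bool}]).

Definition additive_code_dim (n k : nat) (C : {set word n}) : bool :=
  [exists b : {ffun 'I_k -> word n}, is_f2basis C b].

Definition self_orthogonal (n : nat) (C : {set word n}) : bool :=
  [forall u in C, forall w in C, trace_ip u w == 0].

Definition sigma (n k : nat) (v : word n) : nat :=
  #|[set C : {set word n} | [&& additive_code_dim k C, self_orthogonal C & v \in C]]|.

(* An F_2-basis (b_1, ..., b_k) of a self-orthogonal code containing v with
   b_k = v is the same thing as a tuple of F_2-independent, pairwise
   orthogonal words ending in v.  The trace form is alternating and
   nondegenerate, so for independent b_1, ..., b_j the words orthogonal to all
   of them form a subspace of size 2^(2n-j) containing their span, and the
   tuples can be counted by choosing b_(k-1), ..., b_1 one at a time: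
   prod_(1 <= j < k) (2^(2n-j) - 2^j).  Each code C counted by sigma_k
   carries prod_(1 <= j < k) (2^k - 2^j) such tuples, and dividing out gives
   the formula. *)

From mathcomp Require Import all_boot all_order all_algebra.
From mathcomp Require Import zify.
Import GRing.Theory Num.Theory.
Local Open Scope ring_scope.
Set Implicit Arguments. Unset Strict Implicit. Unset Printing Implicit Defensive.

Lemma card_F4 : #|{: F4}| = 4%N.
Proof.
have -> : #|{: F4}| = #|{: bool * bool}|.
  by apply: bij_eq_card; exists F4_dec; [exact: F4_encK | case=> [[] []]].
by rewrite card_prod card_bool.
Qed.

Lemma F4_addxx (a : F4) : a + a = 0. Proof. by case: a. Qed.

Definition trace_form (a b : F4) : F4 :=
  F4_mul a (F4_conj b) + F4_mul (F4_conj a) b.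

Lemma trace_formDl a a' b : trace_form (a + a') b = trace_form a b + trace_form a' b.
Proof. by case: a; case: a'; case: b. Qed.
Lemma trace_formC a b : trace_form a b = trace_form b a.
Proof. by case: a; case: b. Qed.
Lemma trace_formxx a : trace_form a a = 0.
Proof. by case: a. Qed.
Lemma trace_form0l b : trace_form 0 b = 0.
Proof. by case: b. Qed.
Lemma trace_form_F2 a b : trace_form a b = 0 \/ trace_form a b = F1.
Proof. by case: a; case: b; (left; done) || (right; done). Qed.

Section Words.
Variable n : nat.
Implicit Types u w x y : word n.

Lemma word_addxx x : x + x = 0.
Proof. by apply/ffunP=> i; rewrite !ffunE F4_addxx. Qed.

Lemma word_addKx x y : x + (x + y) = y.
Proof. by rewrite addrA word_addxx add0r. Qed.

Lemma trace_ipE u w : trace_ip u w = \sum_(i < n) trace_form (u i) (w i).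
Proof. by []. Qed.

Lemma trace_ipDl u u' w : trace_ip (u + u') w = trace_ip u w + trace_ip u' w.
Proof. by rewrite !trace_ipE -big_split; apply: eq_bigr => i _; rewrite ffunE trace_formDl. Qed.
Lemma trace_ipC u w : trace_ip u w = trace_ip w u.
Proof. by rewrite !trace_ipE; apply: eq_bigr => i _; rewrite trace_formC. Qed.
Lemma trace_ipDr u w w' : trace_ip u (w + w') = trace_ip u w + trace_ip u w'.
Proof. by rewrite trace_ipC trace_ipDl !(trace_ipC u). Qed.
Lemma trace_ipxx u : trace_ip u u = 0.
Proof. by rewrite trace_ipE big1 // => i _; rewrite trace_formxx. Qed.
Lemma trace_ip0l w : trace_ip 0 w = 0.
Proof. by rewrite trace_ipE big1 // => i _; rewrite ffunE trace_form0l. Qed.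

Lemma trace_ip_F2 u w : trace_ip u w = 0 \/ trace_ip u w = F1.
Proof.
rewrite trace_ipE; apply: (big_ind (fun a => a = 0 \/ a = F1)); first by left.
  by move=> a b [->|->] [->|->]; [left|right|right|left].
by move=> i _; apply: trace_form_F2.
Qed.

Lemma trace_ip_nondeg y : y != 0 -> exists x, trace_ip x y = F1.
Proof.
move=> y0; have [i yi0] : exists i, y i != 0.
  apply/existsP; apply: contraR y0; rewrite negb_exists => /forallP y0.
  by apply/eqP/ffunP=> i; rewrite ffunE; apply/eqP; rewrite -[_ == _]negbK y0.
exists [ffun j => if j == i then (if y i == F1 then Fw else F1) else F0].
rewrite trace_ipE (bigD1 i) //= big1 ?addr0 => [|j /negbTE ji].
  by rewrite ffunE eqxx; move: yi0; case: (y i).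
by rewrite ffunE ji trace_form0l.
Qed.

End Words.

Section FfunCons.
Variable T : Type.

Definition fcons m (x : T) (g : {ffun 'I_m -> T}) : {ffun 'I_m.+1 -> T} :=
  [ffun i => if unlift ord0 i is Some j then g j else x].
Definition ftail m (b : {ffun 'I_m.+1 -> T}) : {ffun 'I_m -> T} :=
  [ffun j => b (lift ord0 j)].

Lemma fcons0 m x (g : {ffun 'I_m -> T}) : fcons x g ord0 = x.
Proof. by rewrite ffunE unlift_none. Qed.
Lemma fconsS m x (g : {ffun 'I_m -> T}) j : fcons x g (lift ord0 j) = g j.
Proof. by rewrite ffunE liftK. Qed.
Lemma fcons_max m x (g : {ffun 'I_m.+1 -> T}) : fcons x g ord_max = g ord_max.
Proof. by rewrite -(fconsS x g ord_max); congr (fcons _ _ _); apply/val_inj. Qed.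

Lemma fcons_eta m (b : {ffun 'I_m.+1 -> T}) : b = fcons (b ord0) (ftail b).
Proof. by apply/ffunP=> i; rewrite ffunE; case: unliftP => [j ->|->]; rewrite ?ffunE. Qed.
Lemma fconsK m x : cancel (@fcons m x) (@ftail m).
Proof. by move=> g; apply/ffunP=> j; rewrite ffunE fconsS. Qed.

Lemma forall_fcons m x (g : {ffun 'I_m -> T}) (p : pred T) :
  [forall j, p (fcons x g j)] = p x && [forall j, p (g j)].
Proof.
apply/forallP/andP => [px_g|[px /forallP pg] i].
  split; first by have := px_g ord0; rewrite fcons0.
  by apply/forallP=> j; have := px_g (lift ord0 j); rewrite fconsS.
by case: (unliftP ord0 i) => [j ->|->]; rewrite ?fconsS ?fcons0.
Qed.

End FfunCons.

Lemma card_fcons_ext (T : finType) m (A : {set {ffun 'I_m -> T}})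
    (A' : {set {ffun 'I_m.+1 -> T}}) (S : {ffun 'I_m -> T} -> {set T}) c :
  (forall x g, (fcons x g \in A') = (g \in A) && (x \in S g)) ->
  (forall g, g \in A -> #|S g| = c) -> #|A'| = (#|A| * c)%N.
Proof.
move=> memA' cardS; rewrite -sum1_card.
rewrite (reindex (fun p : {ffun 'I_m -> T} * T => fcons p.2 p.1)); last first.
  exists (fun b => (ftail b, b ord0)) => [[g x] _|b _] /=.
    by rewrite fconsK fcons0.
  by rewrite -fcons_eta.
rewrite (eq_bigl (fun p => (p.1 \in A) && (p.2 \in S p.1))) => [|p]; last exact: memA'.
rewrite -(pair_big_dep (mem A) (fun g x => x \in S g) (fun _ _ => 1%N)) /=.
by rewrite -sum_nat_const; apply: eq_bigr => g gA; rewrite sum1_card cardS.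
Qed.

Lemma card_chains (T : finType) (P : forall m, pred {ffun 'I_m -> T})
    (S : forall m, {ffun 'I_m -> T} -> {set T}) (c : nat -> nat) (v : T) m :
  (forall m x g, P m.+1 (fcons x g) = P m g && (x \in S m g)) ->
  (forall m g, P m g -> #|S m g| = c m) -> P 1%N [ffun => v] ->
  #|[set b : {ffun 'I_m.+1 -> T} | P _ b && (b ord_max == v)]| =
    (\prod_(1 <= j < m.+1) c j)%N.
Proof.
move=> Pcons cardS Pv; elim: m => [|m IHm].
  rewrite big_geq //; apply/eqP/cards1P; exists [ffun => v]; apply/setP=> b.
  rewrite !inE; apply/andP/eqP => [[_ /eqP bv]|->]; last by rewrite ffunE Pv.
  by apply/ffunP=> i; rewrite ffunE (ord1 i) -bv; congr (b _); apply/val_inj.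
rewrite big_nat_recr //= -IHm; apply: (card_fcons_ext (S := S m.+1)) => [x g|g].
  by rewrite !inE Pcons fcons_max -!andbA [(x \in _) && _]andbC.
by rewrite inE => /andP[/cardS].
Qed.

Section Span.
Variable n : nat.
Implicit Types x y z : word n.

Definition f2span m (b : {ffun 'I_m -> word n}) : {set word n} :=
  [set f2comb b c | c : {ffun 'I_m -> bool}].
Definition f2free m (b : {ffun 'I_m -> word n}) : bool :=
  [forall c : {ffun 'I_m -> bool}, (f2comb b c == 0) ==> [forall i, ~~ c i]].

Lemma is_f2basisE k (C : {set word n}) (b : {ffun 'I_k -> word n}) :
  is_f2basis C b = f2free b && (C == f2span b).
Proof. by []. Qed.

Lemma f2comb_cons m z (g : {ffun 'I_m -> word n}) c0 c :
  f2comb (fcons z g) (fcons c0 c) = (if c0 then z else 0) + f2comb g c.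
Proof.
rewrite /f2comb big_ord_recl !fcons0; congr (_ + _).
by apply: eq_bigr => i _; rewrite !fconsS.
Qed.

Lemma f2combD m (b : {ffun 'I_m -> word n}) c c' :
  f2comb b c + f2comb b c' = f2comb b [ffun i => c i (+) c' i].
Proof.
rewrite /f2comb -big_split; apply: eq_bigr => i _; rewrite ffunE.
by case: (c i); case: (c' i); rewrite /= ?addr0 ?add0r ?word_addxx.
Qed.

Lemma f2span0 m (b : {ffun 'I_m -> word n}) : 0 \in f2span b.
Proof.
by apply/imsetP; exists [ffun => false]; rewrite // /f2comb big1 // => i _; rewrite ffunE.
Qed.

Lemma f2spanD m (b : {ffun 'I_m -> word n}) x y :
  x \in f2span b -> y \in f2span b -> x + y \in f2span b.
Proof. by move=> /imsetP[c _ ->] /imsetP[c' _ ->]; rewrite f2combD imset_f. Qed.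

Lemma mem_f2span m (b : {ffun 'I_m -> word n}) j : b j \in f2span b.
Proof.
apply/imsetP; exists [ffun i => i == j] => //.
rewrite /f2comb (bigD1 j) //= ffunE eqxx big1 ?addr0 // => i /negbTE ij.
by rewrite ffunE ij.
Qed.

Lemma f2span_sub m (b : {ffun 'I_m -> word n}) (S : {set word n}) :
  0 \in S -> (forall x y, x \in S -> y \in S -> x + y \in S) ->
  (forall j, b j \in S) -> f2span b \subset S.
Proof.
move=> S0 SD bS; apply/subsetP=> _ /imsetP[c _ ->].
by apply: (big_ind (fun w => w \in S)) => // i _; case: (c i).
Qed.

Lemma f2span_nil (g : {ffun 'I_0 -> word n}) y : (y \in f2span g) = (y == 0).
Proof.
apply/imsetP/eqP => [[c _ ->]|->]; first by rewrite /f2comb big_ord0.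
by exists [ffun => false]; rewrite // /f2comb big_ord0.
Qed.

Lemma f2span_cons m z (g : {ffun 'I_m -> word n}) y :
  (y \in f2span (fcons z g)) = (y \in f2span g) || (y + z \in f2span g).
Proof.
apply/imsetP/orP => [[c _ ->]|[/imsetP[c _ ->]|/imsetP[c _ yz]]].
- rewrite (fcons_eta c) f2comb_cons.
  case: (c ord0); last by left; rewrite add0r imset_f.
  by right; rewrite addrC word_addKx imset_f.
- by exists (fcons false c); rewrite // f2comb_cons add0r.
- by exists (fcons true c); rewrite // f2comb_cons -yz [y + z]addrC word_addKx.
Qed.

Lemma f2free_nil (g : {ffun 'I_0 -> word n}) : f2free g.
Proof. by apply/forallP=> c; apply/implyP=> _; apply/forallP=> -[]. Qed.

Lemma f2free_cons m z (g : {ffun 'I_m -> word n}) :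
  f2free (fcons z g) = f2free g && (z \notin f2span g).
Proof.
apply/forallP/andP => [free_zg|[/forallP free_g /imsetP z_g] c].
  split.
    apply/forallP=> c; apply/implyP=> c0.
    have := free_zg (fcons false c).
    by rewrite f2comb_cons add0r c0 forall_fcons => /andP[].
  apply/imsetP=> -[c _ zc]; have := free_zg (fcons true c).
  by rewrite f2comb_cons -zc word_addxx eqxx forall_fcons.
rewrite (fcons_eta c) f2comb_cons forall_fcons.
case: (c ord0) => /=; last by rewrite add0r; apply: free_g.
apply/implyP=> /eqP zc; case: z_g; exists (ftail c) => //.
by rewrite -[z]addr0 -zc word_addKx.
Qed.

Lemma card_f2span m (b : {ffun 'I_m -> word n}) :
  f2free b -> #|f2span b| = (2 ^ m)%N.
Proof.
move=> /forallP free_b; rewrite card_imset ?card_ffun ?card_bool ?card_ord //.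
move=> c c' cc'; apply/ffunP=> i.
have /(implyP (free_b _)) /forallP /(_ i) : f2comb b [ffun i => c i (+) c' i] == 0.
  by rewrite -f2combD cc' word_addxx.
by rewrite ffunE; case: (c i); case: (c' i).
Qed.

End Span.

Section Perp.
Variable n : nat.
Implicit Types x y z : word n.

Definition perp m (g : {ffun 'I_m -> word n}) : {set word n} :=
  [set x | [forall j, trace_ip x (g j) == 0]].

Lemma perp_cons m z (g : {ffun 'I_m -> word n}) x :
  (x \in perp (fcons z g)) = (x \in perp g) && (trace_ip x z == 0).
Proof. by rewrite !inE (forall_fcons _ _ (fun w => trace_ip x w == 0)) andbC. Qed.

Lemma perp0 m (g : {ffun 'I_m -> word n}) : 0 \in perp g.
Proof. by rewrite inE; apply/forallP=> j; rewrite trace_ip0l. Qed.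

Lemma perpD m (g : {ffun 'I_m -> word n}) x y :
  x \in perp g -> y \in perp g -> x + y \in perp g.
Proof.
rewrite !inE => /forallP xg /forallP yg; apply/forallP=> j.
by rewrite trace_ipDl (eqP (xg j)) (eqP (yg j)) addr0.
Qed.

(* Nondegeneracy relative to a subspace: by induction on [g], correcting a
   dual vector of [y] (or of [y + z]) by a dual vector of the head [z]. *)
Lemma exists_perp_dual m (g : {ffun 'I_m -> word n}) y :
  f2free g -> y \notin f2span g -> exists2 x, x \in perp g & trace_ip x y = F1.
Proof.
elim: m g y => [|m IHm] g y.
  move=> _; rewrite f2span_nil => /trace_ip_nondeg[x xy].
  by exists x => //; rewrite inE; apply/forallP=> -[].
rewrite (fcons_eta g); set z := g ord0; set h := ftail g.
rewrite f2free_cons f2span_cons => /andP[free_h z_h] /norP[y_h yz_h].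
have [a ah az] := IHm h z free_h z_h.
pose y' := if trace_ip a y == F1 then y + z else y.
have [x xh xy'] : exists2 x, x \in perp h & trace_ip x y' = F1.
  by apply: IHm => //; rewrite /y'; case: ifP.
have [xz|xz] := trace_ip_F2 x z.
  exists x; first by rewrite perp_cons xh xz eqxx.
  by move: xy'; rewrite /y'; case: ifP => // _; rewrite trace_ipDr xz addr0.
exists (x + a); first by rewrite perp_cons perpD //= trace_ipDl xz az.
move: xy'; rewrite trace_ipDl /y'.
by case: (trace_ip_F2 a y) => ->; rewrite /= ?trace_ipDr ?xz ?addr0.
Qed.

(* Translation by a word [a] orthogonal to the tail with [<a, z> = 1] maps
   perp (z :: h) onto perp h minus z^perp, so each new vector halves perp. *)
Lemma card_perp m (g : {ffun 'I_m -> word n}) :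
  f2free g -> (#|perp g| * 2 ^ m = 4 ^ n)%N.
Proof.
elim: m g => [|m IHm] g.
  move=> _; have -> : perp g = setT by apply/setP=> x; rewrite !inE; apply/forallP=> -[].
  by rewrite muln1 cardsT card_ffun card_F4 card_ord.
rewrite (fcons_eta g); set z := g ord0; set h := ftail g.
rewrite f2free_cons => /andP[free_h z_h].
have [a ah az] := exists_perp_dual free_h z_h.
rewrite -(IHm h free_h) expnS mulnA; congr (_ * _)%N.
pose Z := [set x | trace_ip x z == 0].
have perp_hZ : perp h :&: Z = perp (fcons z h).
  by apply/setP=> x; rewrite perp_cons !inE.
have perp_hNZ : perp h :\: Z = [set a + x | x in perp (fcons z h)].
  apply/setP=> x; rewrite in_setD inE; apply/andP/imsetP => [[xz xh]|[x' x'zh ->]].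
    exists (a + x); last by rewrite word_addKx.
    rewrite perp_cons perpD //= trace_ipDl az.
    by case: (trace_ip_F2 x z) xz => ->.
  move: x'zh; rewrite perp_cons => /andP[x'h /eqP x'z].
  by rewrite perpD // trace_ipDl az x'z.
by rewrite -(cardsID Z (perp h)) perp_hZ perp_hNZ card_imset ?addnn -?muln2 //; exact: addrI.
Qed.

Lemma card_perp_pow2 m (g : {ffun 'I_m -> word n}) :
  f2free g -> #|perp g| = (2 ^ (2 * n - m))%N.
Proof.
move=> free_g; have := card_perp free_g.
have m_le : (m <= 2 * n)%N.
  rewrite -(leq_exp2l _ _ (isT : (1 < 2)%N)) expnM -(card_perp free_g).
  by rewrite leq_pmull // card_gt0; apply/set0Pn; exists 0; apply: perp0.
rewrite -[4%N]/(2 ^ 2)%N -expnM -{1}(subnK m_le) expnD => /eqP.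
by rewrite eqn_pmul2r ?expn_gt0 // => /eqP.
Qed.

End Perp.

Section Frames.
Variable n : nat.
Variable v : word n.
Hypothesis v_neq0 : v != 0.

Definition pairwise_orth m (b : {ffun 'I_m -> word n}) : bool :=
  [forall i, forall j, trace_ip (b i) (b j) == 0].

Lemma pairwise_orth_cons m z (g : {ffun 'I_m -> word n}) :
  pairwise_orth (fcons z g) = pairwise_orth g && (z \in perp g).
Proof.
apply/forallP/andP => [orth_zg|[/forallP orth_g /[!inE] /forallP z_g] i].
  split; first by apply/forallP=> i; apply/forallP=> j;
    have /forallP/(_ (lift ord0 j)) := orth_zg (lift ord0 i); rewrite !fconsS.
  by rewrite inE; apply/forallP=> j;
    have /forallP/(_ (lift ord0 j)) := orth_zg ord0; rewrite fcons0 fconsS.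
apply/forallP=> j.
case: (unliftP ord0 i) => [i' ->|->]; case: (unliftP ord0 j) => [j' ->|->];
  rewrite ?fconsS ?fcons0 ?trace_ipxx //; first exact: (forallP (orth_g i')).
by rewrite trace_ipC.
Qed.

Lemma f2span_sub_perp m (g : {ffun 'I_m -> word n}) :
  pairwise_orth g -> f2span g \subset perp g.
Proof.
move=> /forallP orth_g; apply: f2span_sub; [exact: perp0 | exact: perpD |].
by move=> j; rewrite inE; apply/forallP=> i; apply: (forallP (orth_g j)).
Qed.

Lemma self_orthogonal_f2span m (b : {ffun 'I_m -> word n}) :
  pairwise_orth b -> self_orthogonal (f2span b).
Proof.
move=> /f2span_sub_perp/subsetP sub_perp; apply/forallP=> u; apply/implyP=> ub.
have : f2span b \subset [set w | trace_ip u w == 0].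
  apply: f2span_sub => [|x y|j]; rewrite ?inE.
  - by rewrite trace_ipC trace_ip0l.
  - by rewrite trace_ipDr => /eqP-> /eqP->; rewrite addr0.
  - by have := sub_perp u ub; rewrite inE => /forallP.
by move=> /subsetP sub_u; apply/forallP=> w; apply/implyP=> /sub_u; rewrite inE.
Qed.

Definition orth_free m (b : {ffun 'I_m -> word n}) := f2free b && pairwise_orth b.

Definition free_in (C : {set word n}) m (b : {ffun 'I_m -> word n}) :=
  f2free b && [forall j, b j \in C].

Lemma card_orth_frames m :
  #|[set b : {ffun 'I_m.+1 -> word n} | orth_free b && (b ord_max == v)]| =
    (\prod_(1 <= j < m.+1) (2 ^ (2 * n - j) - 2 ^ j))%N.
Proof.
apply: (card_chains (S := fun m g => perp g :\: f2span g)) => [j z g|j g|].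
- rewrite /orth_free f2free_cons pairwise_orth_cons in_setD.
  by case: (f2free g) (z \in f2span g) (z \in perp g) (pairwise_orth g) => [] [] [] [].
- case/andP=> free_g /f2span_sub_perp/setIidPr perp_span.
  by rewrite cardsD perp_span card_perp_pow2 // card_f2span.
rewrite /orth_free (fcons_eta [ffun => v]) f2free_cons pairwise_orth_cons.
rewrite f2free_nil f2span_nil ffunE v_neq0 inE /=.
by apply/andP; split; apply/forallP=> -[].
Qed.

Lemma card_frames_in (C : {set word n}) m :
  0 \in C -> (forall x y, x \in C -> y \in C -> x + y \in C) -> v \in C ->
  #|[set b : {ffun 'I_m.+1 -> word n} | free_in C b && (b ord_max == v)]| =
    (\prod_(1 <= j < m.+1) (#|C| - 2 ^ j))%N.
Proof.
move=> C0 CD vC.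
apply: (card_chains (S := fun m g => C :\: f2span g)) => [j z g|j g|].
- rewrite /free_in f2free_cons (forall_fcons _ _ (fun w => w \in C)) in_setD.
  by case: (f2free g) (z \in f2span g) (z \in C) [forall i, g i \in C] => [] [] [] [].
- case/andP=> free_g /forallP gC.
  by rewrite cardsD (setIidPr (f2span_sub C0 CD gC)) card_f2span.
rewrite /free_in (fcons_eta [ffun => v]) f2free_cons f2free_nil f2span_nil.
by rewrite (forall_fcons _ _ (fun w => w \in C)) ffunE v_neq0 vC; apply/forallP=> -[].
Qed.

Lemma additive_code_f2span k (C : {set word n}) :
  additive_code_dim k C -> exists2 b : {ffun 'I_k -> word n}, f2free b & C = f2span b.
Proof.
by rewrite /additive_code_dim => /existsP[b]; rewrite is_f2basisE => /andP[free_b /eqP ->]; exists b.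
Qed.

Lemma orth_frame_span m (b : {ffun 'I_m.+1 -> word n}) :
  orth_free b -> b ord_max == v ->
  [&& additive_code_dim m.+1 (f2span b), self_orthogonal (f2span b) & v \in f2span b].
Proof.
case/andP=> free_b orth_b /eqP <-; rewrite self_orthogonal_f2span // mem_f2span !andbT.
by apply/existsP; exists b; rewrite is_f2basisE free_b /=.
Qed.

Lemma orth_frames_spanning m (C : {set word n}) (b : {ffun 'I_m.+1 -> word n}) :
  additive_code_dim m.+1 C -> self_orthogonal C ->
  (orth_free b && (f2span b == C)) = free_in C b.
Proof.
case/additive_code_f2span=> b' free_b' -> so_C.
apply/andP/andP => [[/andP[free_b _] /eqP <-]|[free_b /forallP b_C]].
  by split=> //; apply/forallP=> j; apply: mem_f2span.
have span_b : f2span b = f2span b'.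
  apply/eqP; rewrite eqEcard card_f2span // card_f2span // leqnn andbT.
  exact: f2span_sub (f2span0 _) (@f2spanD _ _ _) b_C.
rewrite span_b eqxx /orth_free free_b; split=> //.
apply/forallP=> i; apply/forallP=> j.
by have /forallP/(_ (b i)) := so_C; rewrite b_C => /forallP/(_ (b j)); rewrite b_C.
Qed.

(* Double counting: partition the tuples by their span; those spanning a code
   C are exactly the free tuples of elements of C ending in v. *)
Lemma card_orth_frames_by_code m :
  #|[set b : {ffun 'I_m.+1 -> word n} | orth_free b && (b ord_max == v)]| =
    (sigma m.+1 v * \prod_(1 <= j < m.+1) (2 ^ m.+1 - 2 ^ j))%N.
Proof.
rewrite /sigma; set codes := [set C : {set word n} | _].
rewrite -sum1_card (partition_big (@f2span n m.+1) (fun C => C \in codes)) => [|b].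
  rewrite -sum_nat_const; apply: eq_bigr => C; rewrite inE => /and3P[code_C so_C vC].
  rewrite (eq_bigl (fun b => b \in [set b | free_in C b && (b ord_max == v)])) => [|b].
    have [b' free_b' C_eq] := additive_code_f2span code_C; subst C.
    by rewrite sum1_card card_frames_in ?card_f2span ?f2span0 //; apply: f2spanD.
  by rewrite !inE andbAC orth_frames_spanning // andbAC.
by rewrite !inE => /andP[/orth_frame_span].
Qed.

End Frames.

Lemma subn_pow2 a j : (j <= a)%N -> (2 ^ a - 2 ^ j = 2 ^ j * (2 ^ (a - j) - 1))%N.
Proof. by move=> ja; rewrite mulnBr muln1 -expnD subnKC. Qed.

Lemma prod_pow2_sub1_gt0 k : (0 < \prod_(1 <= j < k) (2 ^ j - 1))%N.
Proof.
rewrite big_seq prodn_cond_gt0 // => j; rewrite mem_index_iota => /andP[j_gt0 _].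
by rewrite subn_gt0 -[1%N]/(2 ^ 0)%N ltn_exp2l.
Qed.

Lemma sigma_mul_prod n k (v : word n) : v != 0 -> (1 <= k)%N -> (k <= n)%N ->
  (sigma k v * \prod_(1 <= j < k) (2 ^ j - 1) =
    \prod_(1 <= j < k) (2 ^ (2 * (n - j)) - 1))%N.
Proof.
case: k => // m v_neq0 _ m_lt_n.
have := card_orth_frames_by_code v_neq0 m; rewrite card_orth_frames //.
have -> : (\prod_(1 <= j < m.+1) (2 ^ (2 * n - j) - 2 ^ j) =
    \prod_(1 <= j < m.+1) 2 ^ j * \prod_(1 <= j < m.+1) (2 ^ (2 * (n - j)) - 1))%N.
  rewrite -big_split; apply: eq_big_nat => j /andP[_ j_lt].
  by rewrite subn_pow2; [congr (_ * (2 ^ _ - 1))%N|]; lia.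
have -> : (\prod_(1 <= j < m.+1) (2 ^ m.+1 - 2 ^ j) =
    \prod_(1 <= j < m.+1) 2 ^ j * \prod_(1 <= j < m.+1) (2 ^ j - 1))%N.
  rewrite (big_nat_rev _ _ _ _ _ (fun j => 2 ^ j - 1)%N) -big_split.
  apply: eq_big_nat => j /andP[_ j_lt].
  by rewrite subn_pow2; [congr (_ * (2 ^ _ - 1))%N|]; lia.
rewrite mulnCA => /eqP; rewrite eqn_pmul2l ?prodn_gt0 // => [/eqP <-|j] //.
by rewrite expn_gt0.
Qed.

Lemma natr_pow2_sub1 e : ((2 ^ e - 1)%N%:R = 2%:R ^+ e - 1 :> rat).
Proof. by rewrite natrB ?natrX // expn_gt0. Qed.

Theorem lemmaA2 (n k : nat) (v : word n) :
  v != 0 -> (1 <= k)%N -> (k <= n)%N ->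
  (sigma k v)%:R =
    \prod_(1 <= i < k) ((2%:R ^+ (2 * (n - i)) - 1) / (2%:R ^+ i - 1) : rat).
Proof.
move=> v_neq0 k_gt0 k_le_n.
rewrite prodf_div (eq_bigr (fun i => (2 ^ (2 * (n - i)) - 1)%N%:R)) => [|i _].
  rewrite [X in _ / X](eq_bigr (fun i => (2 ^ i - 1)%N%:R)) => [|i _];
    last by rewrite natr_pow2_sub1.
  rewrite -!natr_prod -(sigma_mul_prod v_neq0 k_gt0 k_le_n).
  by rewrite natrM mulfK // pnatr_eq0 -lt0n prod_pow2_sub1_gt0.
by rewrite natr_pow2_sub1.
Qed.
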